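(* Let $e$ be a hyperimaginary (in the monster model $\mathfrak{C}$ of a complete theory $T$). The following are equivalent: (1) $e$ is normal, i.e. $\mathrm{Fix}(e)$ is a normal subgroup of $\mathrm{Aut}(\mathfrak{C})$; (2) for every hyperimaginary $e'$ with $e'\equiv e$ (i.e. $e'=g(e)$ for some $g\in\mathrm{Aut}(\mathfrak{C})$), $e'\in\mathrm{dcl}(e)$; (3) $e\sim (f(e): f\in \mathrm{Aut}(\mathfrak{C}))$; (4) $e$ is equivalent ($\sim$) to a sequence enumerating the orbit $\{g(d):g\in\mathrm{Aut}(\mathfrak{C})\}$ of some hyperimaginary $d$.
   Context: $\mathfrak{C}$ is a monster model (large saturated, strongly homogeneous model) of a complete first-order theory $T$; ''small'' means of cardinality smaller than that of $\mathfrak{C}$. A hyperimaginary is an equivalence class $e=a_E$ of a possibly infinite small tuple $a$ of elements of $\mathfrak{C}$ under an equivalence relation $E$ that is type-definable without parameters ($0$-type-definable). Automorphisms of $\mathfrak{C}$ act on hyperimaginaries by $f(a_E)=f(a)_E$; a (small) sequence of hyperimaginaries is treated as a single hyperimaginary, fixed by $f$ iff each entry is fixed. $\mathrm{Fix}(e)=\mathrm{Aut}(\mathfrak{C}/e)=\{f\in\mathrm{Aut}(\mathfrak{C}): f(e)=e\}$. A hyperimaginary $d$ is definable over $e$ if $f(d)=d$ for all $f\in\mathrm{Fix}(e)$; $\mathrm{dcl}(e)$ is the class of hyperimaginaries definable over $e$. Two hyperimaginaries $e,d$ are equivalent, $e\sim d$, if $\mathrm{dcl}(e)=\mathrm{dcl}(d)$.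 *)

From Stdlib Require Import List FunctionalExtensionality.
From Stdlib Require Fin.

Set Implicit Arguments.

Record language := {
  Fsym : Type;            (* function symbols (constants = arity 0) *)
  far  : Fsym -> nat;
  Rsym : Type;
  rar  : Rsym -> nat }.

Record structure (L : language) := {
  dom :> Type;
  funs : forall f : Fsym L, (Fin.t (far L f) -> dom) -> dom;
  rels : forall r : Rsym L, (Fin.t (rar L r) -> dom) -> Prop }.

Arguments funs {L} s f _.
Arguments rels {L} s r _.

Inductive term (L : language) (V : Type) : Type :=
  | tvar : V -> term L V
  | tapp : forall f : Fsym L, (Fin.t (far L f) -> term L V) -> term L V.

Inductive formula (L : language) : Type -> Type :=
  | feq  : forall V, term L V -> term L V -> formula L V
  | frel : forall V (r : Rsym L), (Fin.t (rar L r) -> term L V) -> formula L V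
  | fneg : forall V, formula L V -> formula L V
  | fand : forall V, formula L V -> formula L V -> formula L V
  | fex  : forall V, formula L (option V) -> formula L V.

Section Semantics.
Variable L : language.
Variable M : structure L.

Fixpoint teval {V : Type} (env : V -> M) (t : term L V) : M :=
  match t with
  | tvar _ v => env v
  | tapp f args => funs M f (fun i => teval env (args i))
  end.

Definition extend {V : Type} (env : V -> M) (m : M) : option V -> M :=
  fun o => match o with Some v => env v | None => m end.

Fixpoint sat {V : Type} (env : V -> M) (phi : formula L V) {struct phi} : Prop :=
  match phi in formula _ V0 return (V0 -> M) -> Prop with
  | feq t1 t2 => fun env => teval env t1 = teval env t2
  | frel r args => fun env => rels M r (fun i => teval env (args i))
  | fneg psi => fun env => ~ sat env psi
  | fand p q => fun env => sat env p /\ sat env q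
  | fex psi => fun env => exists m : M, sat (extend env m) psi
  end env.

Record aut := {
  aut_fun :> M -> M;
  aut_invf : M -> M;
  aut_K : forall x, aut_invf (aut_fun x) = x;
  aut_V : forall x, aut_fun (aut_invf x) = x;
  aut_funs : forall f args, aut_fun (funs M f args) = funs M f (fun i => aut_fun (args i));
  aut_rels : forall r args, rels M r args <-> rels M r (fun i => aut_fun (args i)) }.

Definition aut_comp_fun (g h : aut) : M -> M := fun x => g (h x).

Program Definition aut_comp (g h : aut) : aut :=
  {| aut_fun := fun x => g (h x);
     aut_invf := fun x => aut_invf h (aut_invf g x) |}.
Next Obligation. now rewrite !aut_K. Qed.
Next Obligation. now rewrite !aut_V. Qed.
Next Obligation. now rewrite !aut_funs. Qed.
Next Obligation.
  rewrite (aut_rels h r args). apply (aut_rels g).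
Qed.

Program Definition aut_inv (g : aut) : aut :=
  {| aut_fun := aut_invf g; aut_invf := aut_fun g |}.
Next Obligation. now rewrite aut_V. Qed.
Next Obligation. now rewrite aut_K. Qed.
Next Obligation.
  rewrite <- (aut_K g (funs M f (fun i => aut_invf g (args i)))).
  rewrite aut_funs. f_equal. f_equal.
  apply functional_extensionality; intro i. now rewrite aut_V.
Qed.
Next Obligation.
  rewrite (aut_rels g r (fun i => aut_invf g (args i))).
  replace (fun i => g (aut_invf g (args i))) with args; [tauto|].
  apply functional_extensionality; intro i. now rewrite aut_V.
Qed.

Definition injective {A B : Type} (h : A -> B) := forall x y, h x = h y -> x = y.

Definition small (X : Type) : Prop :=
  (exists h : X -> M, injective h) /\ ~ (exists h : M -> X, injective h).

(* every finitely satisfiable partial 1-type over a small parameter set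
   (enumerated by [alpha : A -> M]) is realized *)
Definition saturated : Prop :=
  forall (A : Type) (alpha : A -> M), small A ->
  forall p : formula L (option A) -> Prop,
    (forall l : list (formula L (option A)),
        (forall phi, In phi l -> p phi) ->
        exists m : M, forall phi, In phi l -> sat (extend alpha m) phi) ->
    exists m : M, forall phi, p phi -> sat (extend alpha m) phi.

Definition strongly_homogeneous : Prop :=
  forall (A : Type) (alpha beta : A -> M), small A ->
    (forall phi : formula L A, sat alpha phi <-> sat beta phi) ->
    exists g : aut, forall a, g (alpha a) = beta a.

Definition monster : Prop :=
  inhabited (dom M) /\ saturated /\ strongly_homogeneous.

(* the relation on [I]-tuples type-defined (without parameters) by [Sigma],
   a set of formulas in variables x_i (inl i) and y_i (inr i) *)
Definition tdrel {I : Type} (Sigma : formula L (I + I) -> Prop) (a b : I -> M) : Prop :=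
  forall phi, Sigma phi ->
    sat (fun v => match v with inl i => a i | inr i => b i end) phi.

(* a hyperimaginary a_E: a small tuple [htuple] together with a
   0-type-definable equivalence relation on tuples of that length *)
Record hyperim := {
  hI : Type;
  hI_small : small hI;
  hSigma : formula L (hI + hI) -> Prop;
  hE_refl : forall a, tdrel hSigma a a;
  hE_sym : forall a b, tdrel hSigma a b -> tdrel hSigma b a;
  hE_trans : forall a b c, tdrel hSigma a b -> tdrel hSigma b c -> tdrel hSigma a c;
  htuple : hI -> M }.

Definition hact (g : aut) (e : hyperim) : hyperim :=
  {| hI := hI e; hI_small := hI_small e; hSigma := hSigma e;
     hE_refl := hE_refl e; hE_sym := @hE_sym e; hE_trans := @hE_trans e;
     htuple := fun i => g (htuple e i) |}.

(* g \in Fix(e), i.e. g(e) = e, i.e. E(g(a), a) *)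
Definition fixes (g : aut) (e : hyperim) : Prop :=
  tdrel (hSigma e) (fun i => g (htuple e i)) (htuple e).

Definition dcl (e d : hyperim) : Prop :=
  forall g : aut, fixes g e -> fixes g d.

Definition hequiv (e d : hyperim) : Prop :=
  forall x : hyperim, dcl e x <-> dcl d x.

Record hseq := { sJ : Type; sent : sJ -> hyperim }.

Definition fixes_seq (g : aut) (s : hseq) : Prop :=
  forall j, fixes g (sent s j).

Definition dcl_seq (s : hseq) (d : hyperim) : Prop :=
  forall g : aut, fixes_seq g s -> fixes g d.

Definition hequiv_seq (e : hyperim) (s : hseq) : Prop :=
  forall x : hyperim, dcl e x <-> dcl_seq s x.

Definition orbit_seq (d : hyperim) : hseq :=
  {| sJ := aut; sent := fun g => hact g d |}.

Definition normal (e : hyperim) : Prop :=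
  forall g f : aut, fixes f e -> fixes (aut_comp g (aut_comp f (aut_inv g))) e.

End Semantics.

(* Nothing specific to the monster model is needed: all four conditions are
   statements about the action of Aut(C) on hyperimaginaries.  Since
   Fix(g(d)) = g Fix(d) g^-1, condition (2) says that Fix(e) is contained in
   all its conjugates, i.e. that Fix(e) is normal.  A hyperimaginary e is
   equivalent to a sequence s iff e is in dcl(s) and every entry of s is in
   dcl(e), i.e. iff Fix(e) = Fix(s).  For the orbit of e this reduces to (2),
   and the fixer of any orbit sequence is normal, since every automorphism
   permutes the orbit; this gives (4) -> (1). *)

From Stdlib Require Import FunctionalExtensionality.

Section Automorphisms.
Context {L : language} {C : structure L}.

Definition aut_id : aut C :=
  {| aut_fun := fun x => x; aut_invf := fun x => x;
     aut_K := fun _ => eq_refl; aut_V := fun _ => eq_refl;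
     aut_funs := fun _ _ => eq_refl; aut_rels := fun _ _ => iff_refl _ |}.

Fixpoint teval_aut (h : aut C) {V : Type} (env : V -> C) (t : term L V) {struct t} :
  h (teval C env t) = teval C (fun v => h (env v)) t.
Proof.
  destruct t as [v | f args]; simpl.
  - reflexivity.
  - rewrite aut_funs. f_equal. apply functional_extensionality; intro i.
    apply teval_aut.
Qed.

Lemma sat_aut (h : aut C) {V : Type} (phi : formula L V) (env : V -> C) :
  sat C env phi <-> sat C (fun v => h (env v)) phi.
Proof.
  revert env.
  induction phi as [V t1 t2 | V r args | V psi IH | V p IHp q IHq | V psi IH];
    intro env; simpl.
  - rewrite <- !teval_aut. split; intro E.
    + now rewrite E.
    + now rewrite <- (aut_K h (teval C env t1)), <- (aut_K h (teval C env t2)), E.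
  - rewrite (aut_rels h r).
    replace (fun i => h (teval C env (args i)))
      with (fun i => teval C (fun v => h (env v)) (args i)); [tauto|].
    apply functional_extensionality; intro i. now rewrite teval_aut.
  - rewrite IH. tauto.
  - rewrite IHp, IHq. tauto.
  - split; intros [m Hm].
    + exists (h m). rewrite IH in Hm.
      replace (extend C (fun v => h (env v)) (h m))
        with (fun v => h (extend C env m v)); [exact Hm|].
      apply functional_extensionality; intros [v|]; reflexivity.
    + exists (aut_invf h m). rewrite IH.
      replace (fun v => h (extend C env (aut_invf h m) v))
        with (extend C (fun v => h (env v)) m); [exact Hm|].
      apply functional_extensionality; intros [v|]; simpl; [reflexivity|].
      now rewrite aut_V.
Qed.

Lemma tdrel_aut (h : aut C) {I : Type} (S : formula L (I + I) -> Prop) (a b : I -> C) :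
  tdrel C S a b -> tdrel C S (fun i => h (a i)) (fun i => h (b i)).
Proof.
  intros Hab phi Sphi. specialize (Hab phi Sphi). rewrite (sat_aut h) in Hab.
  replace (fun v : I + I => match v with inl i => h (a i) | inr i => h (b i) end)
    with (fun v : I + I => h (match v with inl i => a i | inr i => b i end));
    [exact Hab|].
  apply functional_extensionality; intros [i|i]; reflexivity.
Qed.

Lemma eq_fixes (g g' : aut C) (d : hyperim C) :
  (forall x, g x = g' x) -> fixes g d -> fixes g' d.
Proof.
  intros Egg' Hg. unfold fixes in *.
  replace (fun i => g' (htuple d i)) with (fun i => g (htuple d i)); [exact Hg|].
  apply functional_extensionality; intro i. apply Egg'.
Qed.

Lemma fixes_hact (g h : aut C) (d : hyperim C) :
  fixes g (hact h d) <-> fixes (aut_comp (aut_inv h) (aut_comp g h)) d.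
Proof.
  unfold fixes; simpl; split; intro Hg.
  - pose proof (tdrel_aut (aut_inv h) _ _ _ Hg) as Hg'. simpl in Hg'.
    replace (fun i => aut_invf h (h (htuple d i))) with (htuple d) in Hg'; [exact Hg'|].
    apply functional_extensionality; intro i. now rewrite aut_K.
  - pose proof (tdrel_aut h _ _ _ Hg) as Hg'. simpl in Hg'.
    replace (fun i => g (h (htuple d i)))
      with (fun i => h (aut_invf h (g (h (htuple d i))))); [exact Hg'|].
    apply functional_extensionality; intro i. now rewrite aut_V.
Qed.

Lemma normal_iff_dcl_conjugates (e : hyperim C) :
  normal e <-> forall g : aut C, dcl e (hact g e).
Proof.
  split.
  - intros Ne g f Hf. apply fixes_hact.
    eapply eq_fixes; [|exact (Ne (aut_inv g) f Hf)]. intro; reflexivity.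
  - intros De g f Hf. specialize (De (aut_inv g) f Hf).
    apply fixes_hact in De. eapply eq_fixes; [|exact De]. intro; reflexivity.
Qed.

Lemma dcl_refl (e : hyperim C) : dcl e e.
Proof. intros g Hg. exact Hg. Qed.

Lemma hequiv_seqP (e : hyperim C) (s : hseq C) :
  hequiv_seq e s <-> dcl_seq s e /\ (forall j, dcl e (sent s j)).
Proof.
  split.
  - intro Es. split.
    + apply Es, dcl_refl.
    + intro j. apply Es. intros g Hg. apply Hg.
  - intros [Se eS] x. split.
    + intros ex g Hg. exact (ex g (Se g Hg)).
    + intros sx g Hg. apply sx. intro j. exact (eS j g Hg).
Qed.

Lemma dcl_seq_orbit_seq_self (d : hyperim C) : dcl_seq (orbit_seq d) d.
Proof. intros g Hg. exact (Hg aut_id). Qed.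

Lemma fixes_orbit_seq_conj (g f : aut C) (d : hyperim C) :
  fixes_seq f (orbit_seq d) ->
  fixes_seq (aut_comp g (aut_comp f (aut_inv g))) (orbit_seq d).
Proof.
  intros Hf h. simpl. apply fixes_hact.
  pose proof (Hf (aut_comp (aut_inv g) h)) as Hf'. simpl in Hf'.
  apply fixes_hact in Hf'. eapply eq_fixes; [|exact Hf']. intro; reflexivity.
Qed.

Lemma normal_of_hequiv_orbit_seq (e d : hyperim C) :
  hequiv_seq e (orbit_seq d) -> normal e.
Proof.
  intros Ed g f Hf. apply hequiv_seqP in Ed as [de ed].
  apply de, fixes_orbit_seq_conj. intro h. exact (ed h f Hf).
Qed.

End Automorphisms.

Theorem mainTheorem1 (L : language) (C : structure L) (HC : monster C)
    (e : hyperim C) :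
  (normal e <-> (forall g : aut C, dcl e (hact g e))) /\
  (normal e <-> hequiv_seq e (orbit_seq e)) /\
  (normal e <-> exists d : hyperim C, hequiv_seq e (orbit_seq d)).
Proof.
  assert (orbit_self : hequiv_seq e (orbit_seq e) <-> forall g, dcl e (hact g e)).
  { rewrite hequiv_seqP. pose proof (dcl_seq_orbit_seq_self e). tauto. }
  rewrite orbit_self, <- normal_iff_dcl_conjugates.
  split; [tauto|]. split; [tauto|]. split.
  - intro Ne. exists e. apply orbit_self, normal_iff_dcl_conjugates, Ne.
  - intros [d Ed]. exact (normal_of_hequiv_orbit_seq e d Ed).
Qed.
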